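(* Let $\alpha$ be a composition, $w\in CRHW_n$ with $w(\alpha)=\beta\neq0$, $\tau=\tau_w$, and let $j\ge1$ belong to $\mathrm{supp}(w)$ but not be its maximum. Then every entry of $\tau$ in column $j$ other than the greatest one is strictly smaller than the smallest entry of $\tau$ in column $j+1$.
   Context: Box-adding operators on compositions $\alpha=(\alpha_1,\dots,\alpha_k)$: $\mathfrak t_1(\alpha)=(1,\alpha_1,\dots,\alpha_k)$ (a new row on top); for $i\ge2$, $\mathfrak t_i(\alpha)$ increases the leftmost part equal to $i-1$ by $1$ (adding a box in column $i$), and is $0$ if there is no such part; $\mathfrak t_i(0)=0$. A word $w=\mathfrak t_{i_1}\cdots\mathfrak t_{i_n}$ acts by $w(\alpha)=\mathfrak t_{i_1}(\cdots\mathfrak t_{i_n}(\alpha))$. It is a reverse hookword if $i_1\le\cdots\le i_{k+1}>i_{k+2}>\cdots>i_n$ for some $0\le k\le n-1$. $\mathrm{supp}(w)=\{i_1,\dots,i_n\}$; $w$ is connected if $\mathrm{supp}(w)$ is a set of consecutive integers; $CRHW_n$ is the set of connected reverse hookwords of length $n$. If $w(\alpha)=\beta\ne0$, applying $\mathfrak t_{i_n},\dots,\mathfrak t_{i_1}$ successively adds one box at each step (the box added by $\mathfrak t_{i_m}$ is in column $i_m$); $\tau_w$ is the filling of the set of added boxes in which the box added by $\mathfrak t_{i_m}$ has entry $m$. *)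

From mathcomp Require Import all_boot.
Set Implicit Arguments. Unset Strict Implicit. Unset Printing Implicit Defensive.

Definition composition (a : seq nat) : bool := all (fun x => 0 < x) a.

(* One step of t_i on a composition: returns the new composition and the
   (1-indexed, top = 1) row of the added box, or None (the value 0).
   t_1 adds a new row (1) on top; for i >= 2, t_i increases the leftmost part
   equal to i-1 (that row is index (i-1) a + 1). *)
Definition tstep (i : nat) (a : seq nat) : option (seq nat * nat) :=
  match i with
  | 0 => None
  | 1 => Some (1 :: a, 1)
  | i'.+2 =>
      let r := index i'.+1 a in
      if r < size a then Some (set_nth 0 a r i'.+2, r.+1) else None
  end.

Definition t (i : nat) (o : option (seq nat)) : option (seq nat) :=
  obind (fun a => omap fst (tstep i a)) o.

Definition act (w : seq nat) (a : seq nat) : option (seq nat) :=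
  foldr t (Some a) w.

(* A box of the filling: ((row, column), entry); rows counted from the top
   of the final shape, starting at 1; columns starting at 1. *)
Definition box := ((nat * nat) * nat)%type.

(* Shift a previously added box when a new step is applied: its entry gets
   renumbered by +1 (since we peel off the first letter), and its row moves
   down by one if a new top row was inserted. *)
Definition shift_box (newrow : bool) (b : box) : box :=
  let: ((r, c), e) := b in ((r + newrow, c), e.+1).

(* run w a = Some (w(a), tau_w) where the box added by t_{i_m} has entry m. *)
Fixpoint run (w : seq nat) (a : seq nat) : option (seq nat * seq box) :=
  match w with
  | [::] => Some (a, [::])
  | i :: w' =>
      match run w' a with
      | None => None
      | Some (g, bs) =>
          match tstep i g with
          | None => None
          | Some (b, r) => Some (b, ((r, i), 1) :: map (shift_box (i == 1)) bs)
          end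
      end
  end.

(* The filling tau_w (meaningful when w(alpha) <> 0). *)
Definition tau (w : seq nat) (a : seq nat) : seq box :=
  if run w a is Some (_, bs) then bs else [::].

Definition reverse_hookword (w : seq nat) : Prop :=
  all (fun i => 0 < i) w /\
  exists2 k, k < size w &
    sorted leq (take k.+1 w) /\ sorted (fun x y => y < x) (drop k w).

Definition connected (w : seq nat) : Prop :=
  forall a b c, a \in w -> b \in w -> a <= c <= b -> c \in w.

Definition CRHW (n : nat) (w : seq nat) : Prop :=
  size w = n /\ reverse_hookword w /\ connected w.

Definition supp_max (w : seq nat) : nat := \max_(i <- w) i.

(** The entries of [tau_w] in column [c] are exactly the positions [m] with
    [i_m = c], so the claim is about the letters of [w].  Two equal letters
    [j] at positions [p1 < p2] cannot both lie in the strictly decreasing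
    tail of the hookword, so [p1] is in the weakly increasing head; a letter
    [j + 1] at a position [p3 <= p1] would then be at most [j]. *)

From mathcomp Require Import all_boot.
From mathcomp Require Import zify.

Set Implicit Arguments.
Unset Strict Implicit.
Unset Printing Implicit Defensive.

Lemma run_entries (w a g : seq nat) (bs : seq box) :
  run w a = Some (g, bs) ->
  forall r c e, ((r, c), e) \in bs ->
  exists2 p, p < size w & e = p.+1 /\ nth 0 w p = c.
Proof.
elim: w g bs => [|i w IH] g bs /=; first by case=> _ <-.
case Ew: (run w a) => [[g' bs']|] //.
case: (tstep i g') => [[b r0]|] // [_ <-] r c e.
rewrite in_cons => /orP[/eqP[_ -> ->]|]; first by exists 0.
case/mapP=> [[[r' c'] e']] /(IH _ _ Ew) [p lt_p [-> <-]] [_ -> ->].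
by exists p.+1.
Qed.

Lemma mem_tau (w a : seq nat) r c e :
  ((r, c), e) \in tau w a ->
  exists2 p, p < size w & e = p.+1 /\ nth 0 w p = c.
Proof.
rewrite /tau; case Ew: (run w a) => [[g bs]|] //.
exact: run_entries Ew r c e.
Qed.

Lemma sorted_take_nth_leq (w : seq nat) k i j :
  sorted leq (take k.+1 w) -> i <= j <= k -> j < size w ->
  nth 0 w i <= nth 0 w j.
Proof.
move=> sw /andP[ij jk] js.
have in_take m : m <= j -> m \in [pred m | m < size (take k.+1 w)].
  by rewrite inE size_take_min; lia.
have := sorted_leq_nth leq_trans leqnn 0 sw i j (in_take i ij) (in_take j (leqnn j)) ij.
by rewrite !nth_take //; lia.
Qed.

Lemma sorted_drop_nth_ltn (w : seq nat) k i j :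
  sorted (fun x y => y < x) (drop k w) -> k <= i < j -> j < size w ->
  nth 0 w j < nth 0 w i.
Proof.
move=> sw /andP[ki ij] js.
have gt_trans : transitive (fun x y : nat => y < x) by move=> x y z /=; lia.
have in_drop m : m <= j -> (m - k) \in [pred m | m < size (drop k w)].
  by rewrite inE size_drop; lia.
have lt_ij : i - k < j - k by lia.
have := sorted_ltn_nth gt_trans 0 sw _ _ (in_drop i (ltnW ij)) (in_drop j (leqnn j)) lt_ij.
by rewrite !nth_drop !subnKC //; lia.
Qed.

Lemma repeated_letter_before_peak (w : seq nat) k p q :
  sorted (fun x y => y < x) (drop k w) -> p < q < size w ->
  nth 0 w p = nth 0 w q -> p < k.
Proof.
move=> sw /andP[pq qs] eq_pq; rewrite ltnNge; apply/negP => kp.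
suff: nth 0 w q < nth 0 w p by rewrite eq_pq ltnn.
by apply: sorted_drop_nth_ltn sw _ qs; rewrite kp pq.
Qed.

Theorem mainTheorem10 (n : nat) (alpha beta w : seq nat) (j : nat) :
  composition alpha ->
  CRHW n w ->
  act w alpha = Some beta ->
  1 <= j -> j \in w -> j != supp_max w ->
  forall (r1 e1 r2 e2 r3 e3 : nat),
    ((r1, j), e1) \in tau w alpha ->
    ((r2, j), e2) \in tau w alpha -> e1 < e2 ->
    ((r3, j.+1), e3) \in tau w alpha ->
    e1 < e3.
Proof.
move=> _ [_ [[_ [k _ [head_sorted tail_sorted]]] _]] _ _ _ _.
move=> r1 e1 r2 e2 r3 e3 /mem_tau[p1 _ [-> w_p1]] /mem_tau[p2 p2s [-> w_p2]].
move=> /[!ltnS] lt_p12 /mem_tau[p3 _ [-> w_p3]].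
have p1k : p1 < k.
  by apply: (@repeated_letter_before_peak _ _ _ p2 tail_sorted);
    rewrite ?lt_p12 ?w_p1 ?w_p2.
rewrite ltnS ltnNge; apply/negP => p3p1.
suff: nth 0 w p3 <= nth 0 w p1 by rewrite w_p1 w_p3 ltnn.
by apply: sorted_take_nth_leq head_sorted _ _; [rewrite p3p1 ltnW | lia].
Qed.
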